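(* Let $d\ge2$ be an integer, $X,Y$ disjoint finite sets with $|X|=m$, $|Y|=n$, and $\Gamma$ a symmetric matrix indexed by $X\cup Y$ with entries in $\mathbb{Z}_d$ and zero diagonal. Let $f\ge0$ be an integer and suppose that for every subset $Z\subset Y$ with $|Z|\le 2f$ the $(Y\setminus Z)\times(X\cup Z)$-submatrix of $\Gamma$ is non-singular over $\mathbb{Z}_d$, i.e. $\sum_{x\in X\cup Z}\Gamma_{yx}h_x\equiv0 \pmod d$ for all $y\in Y\setminus Z$ implies $h_x\equiv0\pmod d$ for all $x\in X\cup Z$. Then the graph code $V_\Gamma:\mathcal{H}_X\to\mathcal{H}_Y$ corrects $f$ errors.
   Context: For each $x\in X\cup Y$ let $\mathcal{H}_x\cong\mathbb{C}^d$ with orthonormal basis $|j\rangle$, $j\in\mathbb{Z}_d$; $\mathcal{H}_W=\bigotimes_{x\in W}\mathcal{H}_x$ with product basis $|j_W\rangle$. The graph code $V_\Gamma:\mathcal{H}_X\to\mathcal{H}_Y$ is defined by $\langle j_Y|V_\Gamma|j_X\rangle=d^{-n/2}\exp\bigl(\frac{i\pi}{d}\sum_{x,y\in X\cup Y}j_x\Gamma_{xy}j_y\bigr)$. Identify $\mathcal{H}_Y$ with $\mathcal{H}^{\otimes n}$, $\mathcal{H}=\mathbb{C}^d$. Let $\mathcal{E}_f$ be the linear span of all operators $A_1\otimes\cdots\otimes A_n$ on $\mathcal{H}^{\otimes n}$ with $A_i\ne\mathbb{1}$ for at most $f$ indices $i$. A linear map $V:\mathcal{H}_X\to\mathcal{H}^{\otimes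 n}$ corrects $f$ errors if it satisfies the Knill–Laflamme condition for $\mathcal{E}_f$: for all $F_1,F_2\in\mathcal{E}_f$ there is a number $\omega(F_1^*F_2)$ such that $\langle V\phi_1,F_1^*F_2V\phi_2\rangle=\langle\phi_1,\phi_2\rangle\,\omega(F_1^*F_2)$ for all $\phi_1,\phi_2\in\mathcal{H}_X$. *)

(* complex numbers are modelled by algC (the phases are
   roots of unity and d^{-n/2} is algebraic, so algC suffices). *)
From HB Require Import structures.
From mathcomp Require Import all_boot all_order all_algebra all_field.
Set Implicit Arguments. Unset Strict Implicit. Unset Printing Implicit Defensive.
Import Order.TTheory GRing.Theory Num.Theory.
Local Open Scope ring_scope.

(* product basis labels |j_W>, j_W : W -> Z_d *)
Definition cfg (d : nat) (W : finType) := {ffun W -> 'Z_d}.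
(* vectors of H_W = (C^d)^{(x) W}, as coordinate functions in the product basis *)
Definition vec (d : nat) (W : finType) := cfg d W -> algC.
(* operators on H_W, as matrices  <j|F|k> = F j k *)
Definition op (d : nat) (W : finType) := cfg d W -> cfg d W -> algC.

Definition dotp (d : nat) (W : finType) (a b : vec d W) : algC :=
  \sum_(j : cfg d W) (a j)^* * b j.
Definition op_apply (d : nat) (W : finType) (F : op d W) (a : vec d W) : vec d W :=
  fun j => \sum_(k : cfg d W) F j k * a k.
Definition op_adj (d : nat) (W : finType) (F : op d W) : op d W :=
  fun j k => (F k j)^*.
Definition op_mul (d : nat) (W : finType) (F G : op d W) : op d W :=
  fun j k => \sum_(l : cfg d W) F j l * G l k.

Definition local_op (d : nat) := 'Z_d -> 'Z_d -> algC.
Definition is_id (d : nat) (A : local_op d) : Prop :=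
  forall j k : 'Z_d, A j k = (j == k)%:R.
Definition tensor_op (d : nat) (Y : finType) (A : Y -> local_op d) : op d Y :=
  fun j k => \prod_(y : Y) A y (j y) (k y).
Definition supp_le (d : nat) (Y : finType) (f : nat) (A : Y -> local_op d) : Prop :=
  exists S : {set Y}, (#|S| <= f)%N /\ forall y, y \notin S -> is_id (A y).
Definition in_E (d : nat) (Y : finType) (f : nat) (F : op d Y) : Prop :=
  exists (N : nat) (c : 'I_N -> algC) (A : 'I_N -> Y -> local_op d),
    (forall i, supp_le f (A i)) /\
    forall j k, F j k = \sum_(i < N) c i * tensor_op (A i) j k.

(* linear maps H_X -> H_Y, as matrices <j_Y|V|j_X> *)
Definition code (d : nat) (X Y : finType) := cfg d Y -> cfg d X -> algC.
Definition code_apply (d : nat) (X Y : finType) (V : code d X Y) (phi : vec d X)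
  : vec d Y := fun jY => \sum_(jX : cfg d X) V jY jX * phi jX.

Definition join (d : nat) (X Y : finType) (jX : cfg d X) (jY : cfg d Y)
  (u : X + Y) : 'Z_d :=
  match u with inl x => jX x | inr y => jY y end.

(* graph code: <j_Y|V_G|j_X> = d^{-n/2} exp(i pi/d sum_{u,v} j_u G_uv j_v),
   with exp(i pi / d) = d.-root (-1) (principal root) and the exponent computed
   on the representatives 0..d-1 (well defined since G is symmetric with zero
   diagonal). *)
Definition graph_code (d : nat) (X Y : finType) (G : X + Y -> X + Y -> 'Z_d)
  : code d X Y :=
  fun jY jX =>
    (sqrtC (d%:R : algC)) ^- #|Y| *
    (d.-root (-1 : algC)) ^+
      (\sum_(u : X + Y) \sum_(v : X + Y)
          (nat_of_ord (join jX jY u)) * (nat_of_ord (G u v)) *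
          (nat_of_ord (join jX jY v)))%N.

(* Knill-Laflamme condition for E_f *)
Definition corrects (d : nat) (X Y : finType) (f : nat) (V : code d X Y) : Prop :=
  forall F1 F2 : op d Y, in_E f F1 -> in_E f F2 ->
    exists w : algC, forall phi1 phi2 : vec d X,
      dotp (code_apply V phi1) (op_apply (op_mul (op_adj F1) F2) (code_apply V phi2))
      = dotp phi1 phi2 * w.

Definition inXZ (X Y : finType) (Z : {set Y}) (u : X + Y) : bool :=
  match u with inl _ => true | inr y => y \in Z end.

From HB Require Import structures.
From mathcomp Require Import all_boot all_order all_algebra all_field.
From mathcomp Require Import ring zify.

Set Implicit Arguments.
Unset Strict Implicit.
Unset Printing Implicit Defensive.

Import Order.TTheory GRing.Theory Num.Theory.
Local Open Scope ring_scope.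

(* Since Gamma is symmetric with zero diagonal, the exponent of exp(i pi / d) in
   <j_Y|V|j_X> is twice the quadratic form q(j) = sum_(u < v) j_u Gamma_uv j_v, so
   the phase is chi(q(j)) for the character chi(x) = zeta^x of Z_d, where
   zeta = exp(2 i pi / d) is a primitive d-th root of unity.
   As E_f^* E_f is contained in E_2f, it suffices to check the Knill-Laflamme
   condition for one tensor product B which is the identity off a set S with
   |S| <= 2f.  Translating both labels j, l of <j|B|l> by some t vanishing on S
   leaves B unchanged and multiplies the corresponding term of <V phi1, B V phi2>
   by chi(<s, t>), where s = Gamma_(Y, X u Y) h is the syndrome of the label
   difference h = (k_X, l) - (j_X, j).  Averaging over t kills every term whose
   syndrome does not vanish off S, and for the remaining terms the non-singularity
   hypothesis forces h = 0 on X u S, i.e. j_X = k_X and j = l. *)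

Lemma norm1_of_expr (y : algC) n : (0 < n)%N -> `|y ^+ n| = 1 -> `|y| = 1.
Proof.
by move=> n_gt0 yn1; apply/eqP; rewrite -(pexpr_eq1 n_gt0) ?normr_ge0 // -normrX yn1.
Qed.

Lemma norm1_mul_conj (y : algC) : `|y| = 1 -> y * y^* = 1.
Proof. by move=> y1; rewrite -normCK y1 expr1n. Qed.

Lemma norm1_sub1 (y : algC) : `|y| = 1 -> `|y - 1| ^+ 2 = 2 - 2 * 'Re y.
Proof.
move=> y1; rewrite normCK rmorphB rmorph1 ReE mulrCA mulfV ?pnatr_eq0 // mulr1.
transitivity (y * y^* - y - y^* + 1); first by ring.
by rewrite norm1_mul_conj //; ring.
Qed.

Lemma prim_root_orthogonal m (rho : algC) (a b : 'I_m) :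
  m.-primitive_root rho ->
  \sum_(i < m) rho ^+ (i * a) * (rho ^+ (i * b))^* = (a == b)%:R * m%:R.
Proof.
move=> rho_prim; have rho_m := prim_expr_order rho_prim.
have rho1 : `|rho| = 1.
  by apply: (norm1_of_expr (prim_order_gt0 rho_prim)); rewrite rho_m normr1.
pose lam := rho ^+ a * rho^* ^+ b.
have -> : \sum_(i < m) rho ^+ (i * a) * (rho ^+ (i * b))^* = \sum_(i < m) lam ^+ i.
  apply: eq_bigr => i _.
  by rewrite [(i * a)%N]mulnC [(i * b)%N]mulnC !exprM !rmorphXn -exprMn.
have lam_m : lam ^+ m = 1.
  by rewrite exprMn -!exprM ![(_ * m)%N]mulnC !exprM -rmorphXn rho_m rmorph1 !expr1n mulr1.
have [eq_ab|ab] := eqVneq a b.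
  rewrite mul1r /lam -eq_ab -exprMn norm1_mul_conj // expr1n.
  by under eq_bigr do rewrite expr1n; rewrite sumr_const card_ord.
have lam_neq1 : lam != 1.
  apply: contra ab => /eqP lam1; rewrite -(inj_eq val_inj) /=.
  have : rho ^+ a = rho ^+ b.
    rewrite -[LHS]mulr1 -(expr1n _ b) -(norm1_mul_conj rho1) [rho * _]mulrC.
    by rewrite exprMn mulrA -/lam lam1 mul1r.
  by move/eqP; rewrite (eq_prim_root_expr rho_prim) !modn_small.
apply/eqP; rewrite mul0r; have := subrX1 lam m.
by rewrite lam_m subrr => /esym/eqP; rewrite mulf_eq0 subr_eq0 (negPf lam_neq1).
Qed.

Lemma sum_normr_dft m (rho : algC) (x : 'I_m -> algC) :
  m.-primitive_root rho ->
  \sum_(i < m) `|\sum_(a < m) x a * rho ^+ (i * a)| ^+ 2 = m%:R * \sum_(a < m) `|x a| ^+ 2.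
Proof.
move=> rho_prim.
transitivity (\sum_(a < m) \sum_(b < m) x a * (x b)^* *
                \sum_(i < m) rho ^+ (i * a) * (rho ^+ (i * b))^*).
  under eq_bigr do rewrite normCK rmorph_sum mulr_suml.
  rewrite exchange_big; apply: eq_bigr => a _.
  under eq_bigr do rewrite mulr_sumr.
  rewrite exchange_big; apply: eq_bigr => b _.
  by rewrite mulr_sumr; apply: eq_bigr => i _; rewrite rmorphM; ring.
rewrite mulr_sumr; apply: eq_bigr => a _.
under eq_bigr do rewrite prim_root_orthogonal //.
rewrite (bigD1 a) //= big1 => [|b /negPf ba]; last by rewrite eq_sym ba !mul0r mulr0.
by rewrite eqxx mul1r addr0 normCK; ring.
Qed.

(* If every y_i = y rho^i had Re y_i <= Re w, where w = y^m, then |y_i - 1| >= |w - 1|,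
   hence |sum_(a < m) y_i^a| = |w - 1| / |y_i - 1| <= 1, against Parseval. *)
Lemma exists_root_Re_gt m (rho y : algC) :
  (1 < m)%N -> m.-primitive_root rho -> `|y ^+ m| = 1 -> y ^+ m != 1 ->
  exists i : 'I_m, 'Re (y ^+ m) < 'Re (y * rho ^+ i).
Proof.
move=> m_gt1 rho_prim w1 w_neq1; set w := y ^+ m in w1 w_neq1 *.
apply/existsP; apply: contraT => /existsPn Re_le.
have m_gt0 := ltnW m_gt1.
have y1 : `|y| = 1 := norm1_of_expr m_gt0 w1.
have rho1 : `|rho| = 1.
  by apply: (norm1_of_expr m_gt0); rewrite (prim_expr_order rho_prim) normr1.
pose S (i : 'I_m) := \sum_(a < m) y ^+ a * rho ^+ (i * a).
have S_le1 i : `|S i| ^+ 2 <= 1.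
  pose yi := y * rho ^+ i.
  have yi1 : `|yi| = 1 by rewrite normrM normrX y1 rho1 !expr1n mulr1.
  have S_geom : (yi - 1) * S i = w - 1.
    have yi_m : yi ^+ m = w.
      by rewrite exprMn -exprM mulnC exprM (prim_expr_order rho_prim) expr1n mulr1.
    rewrite -yi_m subrX1; congr (_ * _); apply: eq_bigr => a _.
    by rewrite exprMn -exprM.
  have w1_gt0 : 0 < `|w - 1| ^+ 2 by rewrite exprn_gt0 // normr_gt0 subr_eq0.
  have w1_le : `|w - 1| ^+ 2 <= `|yi - 1| ^+ 2.
    rewrite !norm1_sub1 // lerD2l lerN2 ler_pM2l //.
    by have := Re_le i; rewrite -real_leNgt ?Creal_Re.
  rewrite -(ler_pM2r (lt_le_trans w1_gt0 w1_le)) mul1r -exprMn -normrM mulrC S_geom.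
  exact: w1_le.
have : \sum_(i < m) `|S i| ^+ 2 <= m%:R.
  by apply: le_trans (ler_sum _ (fun i _ => S_le1 i)) _; rewrite sumr_const card_ord.
rewrite sum_normr_dft //.
under eq_bigr do rewrite normrX y1 !expr1n.
rewrite sumr_const card_ord -natrM ler_nat.
by move=> mm_le; move: m_gt1; nia.
Qed.

Lemma Re_le_rootCN1 n (y : algC) : (0 < n)%N -> y ^+ n = -1 -> 'Re y <= 'Re (n.-root (-1)).
Proof.
move=> n_gt0 yn; have [Im_ge0|Im_lt0] := boolP (0 <= 'Im y).
  exact: rootC_Re_max n_gt0 yn Im_ge0.
rewrite -Re_conj; apply: rootC_Re_max => //; first by rewrite -rmorphXn yn rmorphN1.
by rewrite Im_conj oppr_ge0 ltW // real_ltNge ?Creal_Im ?real0.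
Qed.

(* The principal root w maximizes Re among the roots of y^n = -1.  If w had order
   2e < 2n, then an (n/e)-th root of w would be such a root with a larger real
   part. *)
Lemma prim_root_rootCN1 n : (0 < n)%N -> (2 * n).-primitive_root (n.-root (-1 : algC)).
Proof.
move=> n_gt0; set w := n.-root (-1 : algC).
have wn : w ^+ n = -1 by rewrite rootCK.
have N1_neq1 : (-1 : algC) != 1 by rewrite lt_eqF // (lt_trans (ltrN10 _) ltr01).
have [o w_prim o_dvd] : {o | o.-primitive_root w & (o %| 2 * n)%N}.
  by apply: prim_order_exists; rewrite ?muln_gt0 // mulnC exprM wn sqrrN expr1n.
have o_ndvd_n : ~~ (o %| n)%N by rewrite (prim_order_dvd w_prim) wn.
have o_even : o = (2 * o./2)%N.
  have o_odd : ~~ odd o.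
    by apply: contra o_ndvd_n => o_odd; rewrite -(Gauss_dvdr _ (_ : coprime o 2)) ?coprimen2.
  by rewrite mul2n -{1}(odd_double_half o) (negPf o_odd).
set e := o./2 in o_even; rewrite o_even in w_prim o_dvd.
have e_gt0 : (0 < e)%N by have := prim_order_gt0 w_prim; rewrite muln_gt0.
have e_dvd_n : (e %| n)%N by rewrite -(@dvdn_pmul2l 2).
suff e_eq_n : e = n by rewrite -e_eq_n.
apply/eqP; rewrite eqn_leq (dvdn_leq n_gt0 e_dvd_n) leqNgt; apply/negP => e_lt_n.
have we : w ^+ e = -1.
  have /eqP := prim_expr_order w_prim; rewrite mulnC exprM sqrf_eq1.
  case/orP=> /eqP // we1; have := prim_order_dvd w_prim e; rewrite we1 eqxx.
  by move/(dvdn_leq e_gt0); rewrite leqNgt mul2n -addnn -addn1 leq_add2l e_gt0.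
set m := (n %/ e)%N.
have n_eq : n = (m * e)%N by rewrite divnK.
have m_gt1 : (1 < m)%N by move: e_lt_n; rewrite n_eq; nia.
have [rho rho_prim] := C_prim_root_exists (ltnW m_gt1).
pose y := m.-root w; have ym : y ^+ m = w by rewrite rootCK // ltnW.
have ym1 : `|y ^+ m| = 1.
  by rewrite ym; apply: (norm1_of_expr n_gt0); rewrite wn normrN normr1.
have ym_neq1 : y ^+ m != 1.
  by rewrite ym; apply: contra N1_neq1 => /eqP w_eq1; rewrite -wn w_eq1 expr1n.
have [i] := exists_root_Re_gt m_gt1 rho_prim ym1 ym_neq1.
apply/negP; rewrite -real_leNgt ?Creal_Re // ym; apply: Re_le_rootCN1 => //.
by rewrite n_eq exprM exprMn ym -exprM mulnC exprM (prim_expr_order rho_prim) expr1n mulr1 we.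
Qed.

Lemma prim_root_rootCN1_sqr n : (0 < n)%N -> n.-primitive_root (n.-root (-1 : algC) ^+ 2).
Proof.
move=> n_gt0; have := dvdn_prim_root (prim_root_rootCN1 n_gt0) (dvdn_mull 2 (dvdnn n)).
by rewrite mulnK.
Qed.

Section Character.

(* d is written p.+2 so that 'Z_d is convertible to 'I_d. *)
Variables (p : nat) (z : algC).
Local Notation d := p.+2.
Hypothesis z_prim : d.-primitive_root z.

Definition chi (x : 'Z_d) : algC := z ^+ x.

Lemma chiD x y : chi (x + y) = chi x * chi y.
Proof. by rewrite /chi /= prim_expr_mod // exprD. Qed.

Lemma chi_natr n : chi n%:R = z ^+ n.
Proof. by rewrite /chi val_Zp_nat // prim_expr_mod. Qed.

Lemma chiN x : chi (- x) * chi x = 1.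
Proof. by rewrite -chiD addNr. Qed.

Lemma chi_conj x : (chi x)^* = chi (- x).
Proof.
have chi1 : `|chi x| = 1.
  apply: (@norm1_of_expr _ d) => //.
  by rewrite /chi -exprM mulnC exprM (prim_expr_order z_prim) expr1n normr1.
have chi_neq0 : chi x != 0 by rewrite -normr_eq0 chi1 oner_eq0.
by apply: (mulIf chi_neq0); rewrite chiN mulrC norm1_mul_conj.
Qed.

Lemma chi_eq1 x : (chi x == 1) = (x == 0).
Proof.
by rewrite -(expr0 z) (eq_prim_root_expr z_prim) mod0n modn_small // -val_eqE.
Qed.

Definition vanish_on (Y : finType) (S : {set Y}) (t : cfg d Y) : cfg d Y :=
  [ffun y => if y \in S then 0 else t y].

Lemma sum_chi_vanish_on (Y : finType) (S : {set Y}) (s : Y -> 'Z_d) :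
  \sum_(t : cfg d Y) chi (\sum_y s y * vanish_on S t y) =
  if [forall y, (y \in S) || (s y == 0)] then #|{: cfg d Y}|%:R else 0.
Proof.
case: forallP => [s_off|/forallP/forallPn [y0]].
  rewrite -sumr_const; apply: eq_bigr => t _; rewrite big1 ?expr0 // => y _.
  by rewrite ffunE; case/orP: (s_off y) => [->|/eqP->]; rewrite ?mulr0 ?mul0r.
rewrite negb_or => /andP[y0S sy0_neq0].
pose e : cfg d Y := [ffun y => if y == y0 then 1 else 0].
have vanish_onD t y : vanish_on S (t + e) y = vanish_on S t y + vanish_on S e y.
  by rewrite !ffunE; case: ifP; rewrite ?addr0.
have sum_e : \sum_y s y * vanish_on S e y = s y0.
  rewrite (bigD1 y0) //= !ffunE eqxx (negPf y0S) mulr1 big1 ?addr0 // => y /negPf y_neq.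
  by rewrite !ffunE y_neq if_same mulr0.
set sum_chi := \sum_t _.
have : sum_chi = chi (s y0) * sum_chi.
  rewrite {1}/sum_chi (reindex_inj (addIr e)) mulr_sumr; apply: eq_bigr => t _.
  rewrite -chiD -sum_e -big_split; congr (chi _); apply: eq_bigr => y _.
  by rewrite vanish_onD mulrDr addrC.
move/eqP; rewrite -subr_eq0 -{1}[sum_chi]mul1r -mulrBl mulf_eq0 subr_eq0.
by rewrite eq_sym chi_eq1 (negPf sy0_neq0) => /eqP.
Qed.

Lemma sum2_translation_covariant (Y : finType) (S : {set Y})
    (a : cfg d Y -> cfg d Y -> algC) (s : cfg d Y -> cfg d Y -> Y -> 'Z_d) :
  (forall t j l, a (j + vanish_on S t) (l + vanish_on S t) =
                 a j l * chi (\sum_y s j l y * vanish_on S t y)) ->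
  \sum_j \sum_l a j l =
  \sum_j \sum_l (if [forall y, (y \in S) || (s j l y == 0)] then a j l else 0).
Proof.
move=> a_translate; pose N : algC := #|{: cfg d Y}|%:R.
have N_neq0 : N != 0 by rewrite pnatr_eq0 -lt0n; apply/card_gt0P; exists 0.
apply: (mulIf N_neq0); rewrite {1}/N mulr_natr -sumr_const.
transitivity (\sum_(t : cfg d Y) \sum_j \sum_l a j l * chi (\sum_y s j l y * vanish_on S t y)).
  apply: eq_bigr => t _.
  rewrite (reindex_inj (addIr (vanish_on S t))); apply: eq_bigr => j _.
  by rewrite (reindex_inj (addIr (vanish_on S t))); apply: eq_bigr => l _.
rewrite exchange_big mulr_suml; apply: eq_bigr => j _.
rewrite exchange_big mulr_suml; apply: eq_bigr => l _.
by rewrite -mulr_sumr sum_chi_vanish_on //; case: ifP; rewrite ?mulr0 ?mul0r.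
Qed.

End Character.

Lemma big_pair_rank_split (R : Type) (idx : R) (op : Monoid.com_law idx) (T : finType)
    (F : T -> T -> R) :
  \big[op/idx]_u \big[op/idx]_v F u v =
  op (op (\big[op/idx]_u \big[op/idx]_v
            (if (enum_rank u < enum_rank v)%N then F u v else idx))
         (\big[op/idx]_u \big[op/idx]_v
            (if (enum_rank u < enum_rank v)%N then F v u else idx)))
     (\big[op/idx]_u F u u).
Proof.
rewrite [X in op (op _ X) _]exchange_big /=.
under [X in op _ X]eq_bigr do rewrite -[F _ _](big_pred1_eq op) big_mkcond /=.
rewrite -!big_split /=; apply: eq_bigr => u _; rewrite -!big_split /=.
apply: eq_bigr => v _; rewrite eq_sym.
case: ltngtP => [lt_uv|lt_vu|/val_inj/enum_rank_inj ->]; rewrite ?eqxx ?Monoid.simpm //.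
- by rewrite (introF eqP) ?Monoid.simpm // => eq_uv; rewrite eq_uv ltnn in lt_uv.
- by rewrite (introF eqP) ?Monoid.simpm // => eq_uv; rewrite eq_uv ltnn in lt_vu.
Qed.

Section QuadraticForm.

Variables (R : comRingType) (T : finType) (G : T -> T -> R).

Definition qform (J : T -> R) : R :=
  \sum_u \sum_v (if (enum_rank u < enum_rank v)%N then J u * G u v * J v else 0).

Definition bform (J t : T -> R) : R := \sum_u \sum_v J u * G u v * t v.

Lemma eq_qform (J1 J2 : T -> R) :
  J1 =1 J2 -> qform J1 = qform J2.
Proof. by move=> eJ; apply: eq_bigr => u _; apply: eq_bigr => v _; rewrite !eJ. Qed.

Lemma qformD (J t : T -> R) :
  (forall u v, G u v = G v u) -> (forall u, G u u = 0) ->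
  qform (fun u => J u + t u) = qform J + qform t + bform J t.
Proof.
move=> G_sym G_diag; rewrite /bform (big_pair_rank_split +%R) /=.
rewrite [\sum_u J u * G u u * t u]big1 ?addr0 => [|u _]; last by rewrite G_diag mulr0 mul0r.
rewrite /qform -!big_split /=; apply: eq_bigr => u _.
rewrite -!big_split /=; apply: eq_bigr => v _.
by case: ifP => _; rewrite ?addr0 // (G_sym v u); ring.
Qed.

End QuadraticForm.

Lemma expr_symmetric_form p (T : finType) (G : T -> T -> 'Z_p.+2) (J : T -> 'Z_p.+2)
    (w : algC) :
  (forall u v, G u v = G v u) -> (forall u, G u u = 0) ->
  p.+2.-primitive_root (w ^+ 2) ->
  w ^+ (\sum_u \sum_v J u * G u v * J v)%N = chi (w ^+ 2) (qform G J).
Proof.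
move=> G_sym G_diag w2_prim; rewrite (big_pair_rank_split addn) /=.
rewrite [X in (_ + X + _)%N](eq_bigr (fun u => \sum_v
    (if (enum_rank u < enum_rank v)%N then J u * G u v * J v else 0))%N); last first.
  by move=> u _; apply: eq_bigr => v _; case: ifP => // _; rewrite G_sym; ring.
rewrite [(\sum_u _ * G u u * _)%N]big1 => [|u _]; last by rewrite G_diag muln0 mul0n.
rewrite addn0 addnn -mul2n exprM.
rewrite -(chi_natr w2_prim); congr (chi _ _); rewrite natr_sum; apply: eq_bigr => u _.
by rewrite natr_sum; apply: eq_bigr => v _; case: ifP; rewrite // !natrM !natr_Zp.
Qed.

Lemma graph_code_phase p (X Y : finType) (G : X + Y -> X + Y -> 'Z_p.+2) jY jX :
  (forall u v, G u v = G v u) -> (forall u, G u u = 0) ->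
  graph_code G jY jX =
  (sqrtC p.+2%:R) ^- #|Y| * chi (p.+2.-root (-1) ^+ 2) (qform G (join jX jY)).
Proof.
by move=> G_sym G_diag; rewrite /graph_code expr_symmetric_form ?prim_root_rootCN1_sqr.
Qed.

Definition local_adj_mul d (A1 A2 : local_op d) : local_op d :=
  fun j l => \sum_m (A1 m j)^* * A2 m l.

Lemma tensor_op_adj_mul d (Y : finType) (A1 A2 : Y -> local_op d) :
  op_mul (op_adj (tensor_op A1)) (tensor_op A2) =2
  tensor_op (fun y => local_adj_mul (A1 y) (A2 y)).
Proof.
move=> j l; rewrite /op_mul /op_adj /tensor_op bigA_distr_bigA /=.
by apply: eq_bigr => m _; rewrite rmorph_prod -big_split.
Qed.

Lemma supp_le_adj_mul d (Y : finType) f g (A1 A2 : Y -> local_op d) :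
  supp_le f A1 -> supp_le g A2 -> supp_le (f + g) (fun y => local_adj_mul (A1 y) (A2 y)).
Proof.
move=> [S1 [S1_le A1_id]] [S2 [S2_le A2_id]]; exists (S1 :|: S2); split.
  by rewrite (leq_trans (leq_card_setU S1 S2)) ?leq_add.
move=> y; rewrite in_setU negb_or => /andP[yS1 yS2] j l.
rewrite /local_adj_mul (bigD1 j) //= A1_id // A2_id // eqxx rmorph1 mul1r big1 ?addr0 //.
by move=> m /negPf m_neq_j; rewrite A1_id // m_neq_j rmorph0 mul0r.
Qed.

Lemma in_E_adj_mul d (Y : finType) f g (F1 F2 : op d Y) :
  in_E f F1 -> in_E g F2 -> in_E (f + g) (op_mul (op_adj F1) F2).
Proof.
move=> [N1 [c1 [A1 [A1_supp F1E]]]] [N2 [c2 [A2 [A2_supp F2E]]]].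
pose e (q : 'I_N1 * 'I_N2) := (c1 q.1)^* * c2 q.2.
pose B (q : 'I_N1 * 'I_N2) y := local_adj_mul (A1 q.1 y) (A2 q.2 y).
exists #|{: 'I_N1 * 'I_N2}|, (fun i => e (enum_val i)), (fun i => B (enum_val i)).
split=> [i|j l]; first exact: supp_le_adj_mul.
rewrite -(big_enum_val (fun q => e q * tensor_op (B q) j l)) (eq_bigl xpredT) //.
transitivity (\sum_i1 \sum_i2 e (i1, i2) * tensor_op (B (i1, i2)) j l); last first.
  by rewrite pair_bigA.
rewrite /op_mul /op_adj; under eq_bigr do rewrite F1E F2E rmorph_sum mulr_suml.
rewrite exchange_big; apply: eq_bigr => i1 _.
under eq_bigr do rewrite mulr_sumr.
rewrite exchange_big; apply: eq_bigr => i2 _.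
rewrite -tensor_op_adj_mul /op_mul /op_adj mulr_sumr; apply: eq_bigr => m _.
by rewrite rmorphM /e /=; ring.
Qed.

Lemma tensor_op_translate d (Y : finType) (B : Y -> local_op d) (S : {set Y})
    (j l t : cfg d Y) :
  (forall y, y \notin S -> is_id (B y)) -> (forall y, y \in S -> t y = 0) ->
  tensor_op B (j + t) (l + t) = tensor_op B j l.
Proof.
move=> B_id t_S; apply: eq_bigr => y _; rewrite !ffunE.
have [/t_S ->|/B_id B_y] := boolP (y \in S); first by rewrite !addr0.
by rewrite !B_y (inj_eq (addIr _)).
Qed.

Definition kl_form d (X Y : finType) (V : code d X Y) (M : op d Y) (jX kX : cfg d X) :=
  \sum_jY \sum_lY (V jY jX)^* * M jY lY * V lY kX.

Lemma dotp_code_op d (X Y : finType) (V : code d X Y) (M : op d Y) (phi1 phi2 : vec d X) :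
  dotp (code_apply V phi1) (op_apply M (code_apply V phi2)) =
  \sum_jX \sum_kX (phi1 jX)^* * phi2 kX * kl_form V M jX kX.
Proof.
rewrite /dotp /op_apply /code_apply /kl_form.
transitivity (\sum_jY \sum_jX \sum_lY \sum_kX
   (phi1 jX)^* * phi2 kX * ((V jY jX)^* * M jY lY * V lY kX)).
  apply: eq_bigr => jY _; rewrite rmorph_sum mulr_suml; apply: eq_bigr => jX _.
  rewrite mulr_sumr; apply: eq_bigr => lY _; rewrite !mulr_sumr.
  by apply: eq_bigr => kX _; rewrite rmorphM; ring.
rewrite exchange_big; apply: eq_bigr => jX _.
under eq_bigr do rewrite exchange_big.
rewrite exchange_big; apply: eq_bigr => kX _.
by rewrite mulr_sumr; apply: eq_bigr => jY _; rewrite mulr_sumr.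
Qed.

Lemma dotp_code_op_scalar d (X Y : finType) (V : code d X Y) (M : op d Y) (w : algC) :
  (forall jX kX, kl_form V M jX kX = (jX == kX)%:R * w) ->
  forall phi1 phi2 : vec d X,
  dotp (code_apply V phi1) (op_apply M (code_apply V phi2)) = dotp phi1 phi2 * w.
Proof.
move=> kl_scalar phi1 phi2; rewrite dotp_code_op /dotp mulr_suml; apply: eq_bigr => jX _.
rewrite (bigD1 jX) //= big1 => [|kX /negPf kX_neq]; first by rewrite kl_scalar eqxx mul1r addr0.
by rewrite kl_scalar eq_sym kX_neq !mul0r mulr0.
Qed.

Lemma kl_form_sum d (X Y I : finType) (V : code d X Y) (M : op d Y) (e : I -> algC)
    (T : I -> op d Y) jX kX :
  (forall j l, M j l = \sum_i e i * T i j l) ->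
  kl_form V M jX kX = \sum_i e i * kl_form V (T i) jX kX.
Proof.
move=> ME; rewrite /kl_form.
under eq_bigr do under eq_bigr do rewrite ME mulr_sumr mulr_suml.
under eq_bigr do rewrite exchange_big.
rewrite exchange_big /=; apply: eq_bigr => i _; rewrite mulr_sumr; apply: eq_bigr => jY _.
by rewrite mulr_sumr; apply: eq_bigr => lY _; ring.
Qed.

Section GraphCodeKL.

Variables (p : nat) (X Y : finType) (G : X + Y -> X + Y -> 'Z_p.+2) (f : nat).
Variables (z c : algC) (V : code p.+2 X Y).
Local Notation d := p.+2.
Local Notation chi := (chi z).

Hypothesis z_prim : d.-primitive_root z.
Hypothesis G_sym : forall u v, G u v = G v u.
Hypothesis G_diag : forall u, G u u = 0.
Hypothesis G_nondeg : forall Z : {set Y}, (#|Z| <= 2 * f)%N ->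
  forall h : X + Y -> 'Z_d,
    (forall y : Y, y \notin Z -> \sum_(u : X + Y | inXZ Z u) G (inr y) u * h u = 0) ->
    forall u, inXZ Z u -> h u = 0.
Hypothesis V_phase : forall jY jX, V jY jX = c * chi (qform G (join jX jY)).

Definition syndrome (jX kX : cfg d X) (j l : cfg d Y) (y : Y) : 'Z_d :=
  \sum_u G (inr y) u * (join kX l u - join jX j u).

Lemma code_phase_translate jX kX j l t :
  (V (j + t) jX)^* * V (l + t) kX =
  (V j jX)^* * V l kX * chi (\sum_y syndrome jX kX j l y * t y).
Proof.
pose T := join [ffun _ : X => 0 : 'Z_d] t.
have join_add jZ k : join jZ (k + t) =1 (fun u => join jZ k u + T u).
  by case=> [x|y]; rewrite /T /= ffunE ?addr0.
have bform_diff : bform G (join kX l) T - bform G (join jX j) T =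
                  \sum_y syndrome jX kX j l y * t y.
  rewrite /bform -sumrB; under eq_bigr do rewrite -sumrB.
  rewrite exchange_big big_sumType /= big1 ?add0r => [|x _]; last first.
    by apply: big1 => u _; rewrite ffunE !mulr0 subrr.
  apply: eq_bigr => y _; rewrite /syndrome mulr_suml; apply: eq_bigr => u _.
  by rewrite G_sym; ring.
rewrite !V_phase !(eq_qform _ (join_add _ _)) !qformD // !rmorphM /= !chi_conj //.
rewrite -bform_diff mulrACA [in RHS]mulrACA -[RHS]mulrA -!chiD //.
by congr (_ * chi _); ring.
Qed.

Lemma eq_labels_of_syndrome (S : {set Y}) (jX kX : cfg d X) (j l : cfg d Y) :
  (#|S| <= 2 * f)%N -> (forall y, y \notin S -> j y = l y) ->
  [forall y, (y \in S) || (syndrome jX kX j l y == 0)] -> jX = kX /\ j = l.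
Proof.
move=> S_le jl_off /forallP syndrome0.
pose h u := join kX l u - join jX j u.
have h0 : forall u, inXZ S u -> h u = 0.
  apply: (G_nondeg S_le) => y yS; have := syndrome0 y; rewrite (negPf yS) => /eqP syn0.
  rewrite -[RHS]syn0 /syndrome big_mkcond; apply: eq_bigr => -[x|y'] _ //=.
  by case: ifP => // /negbT y'S; rewrite jl_off // subrr mulr0.
split; apply/ffunP.
  by move=> x; apply/eqP; rewrite eq_sym -subr_eq0; apply/eqP/(h0 (inl x)).
move=> y; have [yS|/jl_off //] := boolP (y \in S).
by apply/eqP; rewrite eq_sym -subr_eq0; apply/eqP/(h0 (inr y)).
Qed.

Lemma kl_form_tensor (B : Y -> local_op d) (S : {set Y}) :
  (#|S| <= 2 * f)%N -> (forall y, y \notin S -> is_id (B y)) -> forall jX kX,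
  kl_form V (tensor_op B) jX kX = (jX == kX)%:R * (c^* * c * \sum_j tensor_op B j j).
Proof.
move=> S_le B_id jX kX; pose a j l := (V j jX)^* * tensor_op B j l * V l kX.
have a_translate t j l : a (j + vanish_on S t) (l + vanish_on S t) =
    a j l * chi (\sum_y syndrome jX kX j l y * vanish_on S t y).
  rewrite /a (tensor_op_translate _ _ B_id) => [|y yS]; last by rewrite ffunE yS.
  by rewrite mulrAC code_phase_translate; ring.
rewrite /kl_form -/a (sum2_translation_covariant z_prim a_translate).
have a_diag j l : (if [forall y, (y \in S) || (syndrome jX kX j l y == 0)] then a j l else 0)
                = (if (jX == kX) && (l == j) then a j l else 0).
  have [->|a_neq0] := eqVneq (a j l) 0; first by rewrite !if_same.
  have jl_off y : y \notin S -> j y = l y.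
    move=> yS; have : tensor_op B j l != 0.
      by apply: contraNneq a_neq0; rewrite /a => ->; rewrite mulr0 mul0r.
    by move/prodf_neq0/(_ y isT); rewrite B_id // pnatr_eq0 eqb0 negbK => /eqP.
  congr (if _ then _ else _); apply/idP/idP => [/(eq_labels_of_syndrome S_le jl_off)[-> ->]|].
    by rewrite !eqxx.
  case/andP => /eqP <- /eqP <-; apply/forallP => y.
  by rewrite /syndrome big1 ?eqxx ?orbT // => u _; rewrite subrr mulr0.
under eq_bigr do under eq_bigr do rewrite a_diag.
have [eq_jk|_] := eqVneq jX kX; last by rewrite mul0r big1 // => j _; rewrite big1.
rewrite mul1r mulr_sumr; apply: eq_bigr => j _; rewrite -big_mkcond big_pred1_eq.
rewrite /a -eq_jk V_phase rmorphM /= chi_conj //; set q := qform G _.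
transitivity (c^* * c * tensor_op B j j * (chi (- q) * chi q)); first by ring.
by rewrite chiN // mulr1.
Qed.

Lemma kl_form_in_E (M : op d Y) :
  in_E (2 * f) M ->
  forall jX kX, kl_form V M jX kX = (jX == kX)%:R * (c^* * c * \sum_j M j j).
Proof.
case=> N [e [B [B_supp ME]]] jX kX; rewrite (kl_form_sum _ _ _ ME).
transitivity (\sum_i e i * ((jX == kX)%:R * (c^* * c * \sum_j tensor_op (B i) j j))).
  apply: eq_bigr => i _; have [S [S_le B_id]] := B_supp i.
  by rewrite (kl_form_tensor S_le B_id).
under [in RHS]eq_bigr do rewrite ME; rewrite [in RHS]exchange_big !mulr_sumr.
by apply: eq_bigr => i _; rewrite -mulr_sumr; ring.
Qed.

End GraphCodeKL.

Theorem corollary1 (d : nat) (X Y : finType) (G : X + Y -> X + Y -> 'Z_d) (f : nat) :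
  (1 < d)%N ->
  (forall u v, G u v = G v u) ->
  (forall u, G u u = 0) ->
  (forall Z : {set Y}, (#|Z| <= 2 * f)%N ->
     forall h : X + Y -> 'Z_d,
       (forall y : Y, y \notin Z ->
          \sum_(u : X + Y | inXZ Z u) G (inr y) u * h u = 0) ->
       forall u, inXZ Z u -> h u = 0) ->
  corrects f (graph_code G).
Proof.
case: d G => [|[|p]] // G _ G_sym G_diag G_nondeg F1 F2 F1_E F2_E.
pose c : algC := (sqrtC p.+2%:R) ^- #|Y|.
pose M := op_mul (op_adj F1) F2.
exists (c^* * c * \sum_j M j j); apply: dotp_code_op_scalar => jX kX.
have M_E : in_E (2 * f) M by rewrite mul2n -addnn; apply: in_E_adj_mul.
exact: (kl_form_in_E (prim_root_rootCN1_sqr (ltn0Sn p.+1)) G_sym G_diag G_nondeg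
          (fun jY jX => graph_code_phase jY jX G_sym G_diag) M_E).
Qed.
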